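(* The fundamental group $\pi_1(\mathrm{Conf}^{lf}_\infty(\mathbb C),\widetilde{\mathbb N})$ is uncountable.
   Context: $\mathrm{Conf}^{lf}_\infty(\mathbb C)$ is the set of sequences $(x_j)_{j\ge1}$ of pairwise distinct complex numbers such that $\{j:|x_j|\le R\}$ is finite for all $R>0$, with metric $d_{\Sigma}(x,y)=\sum_j2^{-j}\min\{|x_j-y_j|,1\}+d_{\mathcal V}(P(x),P(y))$, where $P(x)=\{x_j\}$ and $d_{\mathcal V}$ is the vague metric $d_{\mathcal V}(A,B)=\sum_j 2^{-j}\frac{|\sum_{a\in A}\varphi_j(a)-\sum_{b\in B}\varphi_j(b)|}{1+|\sum_{a\in A}\varphi_j(a)-\sum_{b\in B}\varphi_j(b)|}$ for a fixed sequence $(\varphi_j)$ of compactly supported continuous real functions such that for each $m$ those supported in $\{|z|\le m\}$ are sup-norm dense among such functions supported in $\{|z|\le m\}$. $\widetilde{\mathbb N}=(1,2,3,\dots)$. *)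

From HB Require Import structures.
From mathcomp Require Import all_boot all_order all_algebra.
From mathcomp Require Import all_classical all_reals.
From mathcomp Require Import topology normedtype sequences.
Import numFieldNormedType.Exports.
Set Implicit Arguments. Unset Strict Implicit. Unset Printing Implicit Defensive.
Import Order.TTheory GRing.Theory Num.Theory.
Local Open Scope classical_set_scope.
Local Open Scope ring_scope.

(* The complex plane C, as R^2 = R * R (real part, imaginary part). *)
Notation Cpt R := (R * R)%type.

Section Conf.
Variable R : realType.
Local Notation Cpt := (Cpt R).
Definition csub (z w : Cpt) : Cpt := (z.1 - w.1, z.2 - w.2).
Definition cabs (z : Cpt) : R := Num.sqrt (z.1 ^+ 2 + z.2 ^+ 2).

(* Sequences are indexed from 0: x j here is x_{j+1} of the paper. *)
Definition Seq := nat -> Cpt.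

Definition Pset (x : Seq) : set Cpt := range x.

Definition conf (x : Seq) : Prop :=
  (forall i j : nat, i <> j -> x i <> x j) /\
  (forall r : R, 0 < r -> finite_set [set j : nat | cabs (x j) <= r]).

Definition supported_in (m : R) (f : Cpt -> R) : Prop :=
  forall z, m < cabs z -> f z = 0.
Definition Cc (f : Cpt -> R) : Prop :=
  continuous f /\ exists m : R, supported_in m f.

Definition good_test_seq (phi : nat -> Cpt -> R) : Prop :=
  (forall j, Cc (phi j)) /\
  (forall (m : nat) (f : Cpt -> R), continuous f -> supported_in m%:R f ->
     forall eps : R, 0 < eps ->
       exists j, supported_in m%:R (phi j) /\
                 forall z, `|f z - phi j z| <= eps).

Definition rseries (u : nat -> R) : R := limn (fun n => \sum_(0 <= j < n) u j).

(* weight 2^{-j} for the paper's index j = our j + 1 *)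
Definition w (j : nat) : R := 2 ^- j.+1.

Definition psum (phi : Cpt -> R) (A : set Cpt) : R := \sum_(a \in A) phi a.

Definition dV (phi : nat -> Cpt -> R) (A B : set Cpt) : R :=
  rseries (fun j =>
    let t := `|psum (phi j) A - psum (phi j) B| in w j * (t / (1 + t))).

Definition dSigma (phi : nat -> Cpt -> R) (x y : Seq) : R :=
  rseries (fun j => w j * Num.min (cabs (csub (x j) (y j))) 1)
  + dV phi (Pset x) (Pset y).

Definition Ntilde : Seq := fun j => (j.+1%:R, 0).

Definition unitI (t : R) : Prop := 0 <= t <= 1.

Definition loop (phi : nat -> Cpt -> R) (b : Seq) (g : R -> Seq) : Prop :=
  (forall t, unitI t -> conf (g t)) /\
  (forall t, unitI t -> forall e : R, 0 < e -> exists2 d : R, 0 < d &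
     forall s, unitI s -> `|s - t| < d -> dSigma phi (g s) (g t) < e) /\
  g 0 = b /\ g 1 = b.

Definition loop_homotopic (phi : nat -> Cpt -> R) (b : Seq) (g h : R -> Seq) : Prop :=
  exists H : R -> R -> Seq,
    (forall s t, unitI s -> unitI t -> conf (H s t)) /\
    (forall s t, unitI s -> unitI t -> forall e : R, 0 < e -> exists2 d : R, 0 < d &
       forall s' t', unitI s' -> unitI t' -> `|s' - s| < d -> `|t' - t| < d ->
         dSigma phi (H s' t') (H s t) < e) /\
    (forall t, unitI t -> H 0 t = g t) /\
    (forall t, unitI t -> H 1 t = h t) /\
    (forall s, unitI s -> H s 0 = b /\ H s 1 = b).

Definition pi1 (phi : nat -> Cpt -> R) (b : Seq) : set (set (R -> Seq)) :=
  [set [set h | loop phi b h /\ loop_homotopic phi b g h] | g in loop phi b].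

End Conf.

(* For S a set of naturals, let [loopS S] be the loop at N~ in which, for each
   k in S, the point 2k runs once clockwise around the point 2k+1 along a small
   triangle (the k-th pair moving during [1 - 2^-k, 1 - 2^-(k+1)]), all other
   points staying put. The metric d_Sigma controls every coordinate, so along a
   homotopy H of such loops the difference of the points 2k and 2k+1 is a
   nonvanishing continuous function on the unit square; by compactness its
   direction varies by less than pi/4 across small grid cells, hence the sum of
   the angle increments along a fine grid row (a discrete winding number) is the
   same for both ends of H. It is negative when k is in S and zero otherwise, so
   S |-> [loopS S] is injective on homotopy classes, and Cantor's diagonal
   argument shows that pi_1 is uncountable. *)

From HB Require Import structures.
From mathcomp Require Import all_boot all_order all_algebra.
From mathcomp Require Import all_classical all_reals.
From mathcomp Require Import topology normedtype sequences trigo.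
From mathcomp Require Import ring lra.
Import numFieldNormedType.Exports.
Set Implicit Arguments. Unset Strict Implicit. Unset Printing Implicit Defensive.
Import Order.TTheory GRing.Theory Num.Theory.
Local Open Scope classical_set_scope.
Local Open Scope ring_scope.

Section Weights.
Variable R : realType.

Lemma w_gt0 j : 0 < w R j.
Proof. by rewrite /w invr_gt0 exprn_gt0. Qed.

Lemma w_ge0 j : 0 <= w R j.
Proof. exact: ltW (w_gt0 j). Qed.

Lemma w_le1 j : w R j <= 1.
Proof. by rewrite /w invf_le1 ?exprn_gt0 ?exprn_ege1 ?ler1n ?ltr0n. Qed.

Lemma sum_w m n : (m <= n)%N -> \sum_(m <= j < n) w R j = 2 ^- m - 2 ^- n.
Proof.
elim: n => [|n IHn]; first by rewrite leqn0 => /eqP ->; rewrite big_geq // subrr.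
rewrite leq_eqVlt => /orP[/eqP ->|]; first by rewrite big_geq // subrr.
rewrite ltnS => mn; rewrite big_nat_recr //= IHn // /w.
have -> : (2 : R) ^- n.+1 = 2 ^- n / 2 by rewrite exprS invfM mulrC.
lra.
Qed.

Lemma exp2N_small (eps : R) : 0 < eps -> exists J : nat, 2 ^- J < eps.
Proof.
move=> eps_gt0; exists (Num.truncn eps^-1).+1.
have J_gt : eps^-1 < (Num.truncn eps^-1).+1%:R by apply: truncnS_gt.
have J_lt : ((Num.truncn eps^-1).+1%:R : R) < 2 ^+ (Num.truncn eps^-1).+1.
  by rewrite -natrX ltr_nat ltn_expl.
rewrite invf_plt ?posrE ?exprn_gt0 //; lra.
Qed.

Section Dominated.
Variable u : nat -> R.
Hypothesis u_w : forall j, 0 <= u j <= w R j.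

Let u_ge0 j : 0 <= u j. Proof. by case/andP: (u_w j). Qed.

Let partial_sum_nondecreasing : nondecreasing_seq (fun n => \sum_(0 <= j < n) u j).
Proof.
move=> m n mn; rewrite (big_cat_nat (leq0n m) mn) /= lerDl.
by apply: sumr_ge0 => j _; exact: u_ge0.
Qed.

Lemma partial_sum_le_tail J n :
  \sum_(0 <= j < n) u j <= \sum_(0 <= j < J) u j + 2 ^- J.
Proof.
case: (leqP n J) => nJ.
  rewrite (big_cat_nat (leq0n n) nJ) /= -addrA lerDl addr_ge0 //.
    by apply: sumr_ge0 => j _; exact: u_ge0.
  by rewrite invr_ge0 exprn_ge0.
rewrite (big_cat_nat (leq0n J) (ltnW nJ)) /= lerD2l.
apply: (@le_trans _ _ (\sum_(J <= j < n) w R j)).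
  by apply: ler_sum => j _; case/andP: (u_w j).
by rewrite sum_w ?(ltnW nJ) // lerBlDr lerDl invr_ge0 exprn_ge0.
Qed.

Lemma rseries_cvg : cvgn (fun n => \sum_(0 <= j < n) u j).
Proof.
apply: nondecreasing_is_cvgn; first exact: partial_sum_nondecreasing.
exists (\sum_(0 <= j < 0) u j + 2 ^- 0) => _ [n _ <-].
exact: partial_sum_le_tail.
Qed.

Lemma partial_sum_le_rseries n : \sum_(0 <= j < n) u j <= rseries u.
Proof.
apply: (nondecreasing_cvgn_le partial_sum_nondecreasing).
exact: rseries_cvg.
Qed.

Lemma rseries_le_tail J : rseries u <= \sum_(0 <= j < J) u j + 2 ^- J.
Proof.
apply: limr_le; first exact: rseries_cvg.
by apply: nearW => n; exact: partial_sum_le_tail.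
Qed.

End Dominated.

Lemma cabs_ge0 (z : Cpt R) : 0 <= cabs z.
Proof. exact: sqrtr_ge0. Qed.

Let coord_term_w (x y : Seq R) j :
  0 <= w R j * Num.min (cabs (csub (x j) (y j))) 1 <= w R j.
Proof.
apply/andP; split; first by rewrite mulr_ge0 ?w_ge0 // le_min cabs_ge0 ler01.
by rewrite ler_piMr ?w_ge0 // ge_min lexx orbT.
Qed.

Let vague_term_w (t : R) j : 0 <= t -> 0 <= w R j * (t / (1 + t)) <= w R j.
Proof.
move=> t_ge0; have t1_gt0 : 0 < 1 + t by lra.
apply/andP; split; first by rewrite mulr_ge0 ?w_ge0 // divr_ge0 // ltW.
by rewrite ler_piMr ?w_ge0 // ler_pdivrMr // mul1r; lra.
Qed.

Lemma dV_ge0 (phi : nat -> Cpt R -> R) A B : 0 <= dV phi A B.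
Proof.
apply: le_trans (partial_sum_le_rseries _ 0); last by move=> j; apply: vague_term_w.
by rewrite big_geq.
Qed.

Lemma dSigma_ge_coord (phi : nat -> Cpt R -> R) (x y : Seq R) i :
  w R i * Num.min (cabs (csub (x i) (y i))) 1 <= dSigma phi x y.
Proof.
have := partial_sum_le_rseries (coord_term_w x y) i.+1.
rewrite big_nat_recr //=.
have : 0 <= \sum_(0 <= j < i) w R j * Num.min (cabs (csub (x j) (y j))) 1.
  by apply: sumr_ge0 => j _; case/andP: (coord_term_w x y j).
have := dV_ge0 phi (Pset x) (Pset y); rewrite /dSigma; lra.
Qed.

Lemma dSigma_le_partial (phi : nat -> Cpt R -> R) (x y : Seq R) J :
  dSigma phi x y <= \sum_(0 <= j < J) cabs (csub (x j) (y j)) +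
     \sum_(0 <= j < J) `|psum (phi j) (Pset x) - psum (phi j) (Pset y)| +
     2 * 2 ^- J.
Proof.
set T := fun j => `|psum (phi j) (Pset x) - psum (phi j) (Pset y)|.
have coord_tail := rseries_le_tail (coord_term_w x y) J.
have vague_tail := rseries_le_tail (fun j => vague_term_w j (normr_ge0
   (psum (phi j) (Pset x) - psum (phi j) (Pset y)))) J.
have coord_le : \sum_(0 <= j < J) w R j * Num.min (cabs (csub (x j) (y j))) 1
    <= \sum_(0 <= j < J) cabs (csub (x j) (y j)).
  apply: ler_sum => j _.
  apply: (@le_trans _ _ (Num.min (cabs (csub (x j) (y j))) 1)); last by rewrite ge_min lexx.
  by rewrite ler_piMl ?w_le1 // le_min cabs_ge0 ler01.
have vague_le : \sum_(0 <= j < J) w R j * (T j / (1 + T j)) <= \sum_(0 <= j < J) T j.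
  apply: ler_sum => j _; have T_ge0 : 0 <= T j by exact: normr_ge0.
  have T1_gt0 : 0 < 1 + T j by lra.
  apply: (@le_trans _ _ (T j / (1 + T j))).
    by rewrite ler_piMl ?w_le1 // divr_ge0 // ltW.
  by rewrite ler_pdivrMr // ler_peMr //; lra.
rewrite /dSigma /dV; lra.
Qed.

End Weights.

Section Turn.
Variable R : realType.
Implicit Types (a b c : Cpt R) (u v : R).

Lemma atan_lt_pi4 u : `|u| < 1 -> `|atan u| < pi / 4%:R.
Proof.
rewrite !ltr_norml -atan1 => /andP[u_gtN1 u_lt1].
by rewrite -atanN !lt_atan.
Qed.

Lemma atanD u v : `|u| < 1 -> `|v| < 1 ->
  atan u + atan v = atan ((u + v) / (1 - u * v)).
Proof.
move=> /atan_lt_pi4 + /atan_lt_pi4; rewrite !ltr_norml => /andP[u1 u2] /andP[v1 v2].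
have pi_gt0 : 0 < pi :> R := pi_gt0 R.
have cos_atan_neq0 x : cos (atan x) != 0 :> R.
  by apply: lt0r_neq0; apply: cos_gt0_pihalf; rewrite atan_gtNpi2 atan_ltpi2.
rewrite -[LHS]tanK ?tanD ?cos_atan_neq0 ?atanK // in_itv /=; apply/andP; split; lra.
Qed.

Definition cross a b : R := a.1 * b.2 - a.2 * b.1.
Definition dot a b : R := a.1 * b.1 + a.2 * b.2.

(* [a] and [b] make an angle smaller than pi/4, and [turn a b] is that angle,
   signed counterclockwise. *)
Definition close a b : Prop := `|cross a b| < dot a b.
Definition turn a b : R := atan (cross a b / dot a b).

Lemma close_dot_gt0 a b : close a b -> 0 < dot a b.
Proof. exact: le_lt_trans. Qed.

Lemma turn_id a : turn a a = 0.
Proof. by rewrite /turn (_ : cross a a = 0) ?mul0r ?atan0 // /cross; ring. Qed.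

Lemma turn_le0 a b : cross a b <= 0 -> 0 < dot a b -> turn a b <= 0.
Proof.
by move=> cr dt; rewrite /turn -atan0 le_atan // pmulr_lle0 // invr_gt0.
Qed.

Lemma turn_lt0 a b : cross a b < 0 -> 0 < dot a b -> turn a b < 0.
Proof.
by move=> cr dt; rewrite /turn -atan0 lt_atan // pmulr_llt0 // invr_gt0.
Qed.

Lemma turnD a b c : close a b -> close b c -> turn a c = turn a b + turn b c.
Proof.
rewrite /close /turn => ab bc.
set P := dot a b; set Q := cross a b; set P' := dot b c; set Q' := cross b c.
have P_gt0 : 0 < P by apply: le_lt_trans ab.
have P'_gt0 : 0 < P' by apply: le_lt_trans bc.
have ratio_lt1 (x y : R) : 0 < y -> `|x| < y -> `|x / y| < 1.
  by move=> y0 xy; rewrite normrM normfV (gtr0_norm y0) ltr_pdivrMr // mul1r.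
rewrite atanD ?ratio_lt1 //; congr atan.
have b_gt0 : 0 < b.1 ^+ 2 + b.2 ^+ 2.
  rewrite lt_def addr_ge0 ?sqr_ge0 // andbT; apply/eqP => b0.
  have [b1 b2] : b.1 = 0 /\ b.2 = 0.
    by split; apply/eqP; rewrite -sqrf_eq0; apply/eqP; nra.
  by move: P_gt0; rewrite /P /dot b1 b2; lra.
(* As for complex numbers: conj(a) b * conj(b) c = |b|^2 conj(a) c. *)
have cross_ac : Q * P' + Q' * P = (b.1 ^+ 2 + b.2 ^+ 2) * cross a c.
  by rewrite /Q /P' /Q' /P /cross /dot; ring.
have dot_ac : P * P' - Q * Q' = (b.1 ^+ 2 + b.2 ^+ 2) * dot a c.
  by rewrite /Q /P' /Q' /P /cross /dot; ring.
have den_gt0 : 0 < P * P' - Q * Q'.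
  have : `|Q| * `|Q'| < P * P' by apply: ltr_pM.
  by rewrite -normrM => /(le_lt_trans (ler_norm _)); lra.
have dot_ac_neq0 : dot a c != 0 by apply/eqP => h; move: dot_ac; rewrite h mulr0; lra.
have -> : cross a c / dot a c = (Q * P' + Q' * P) / (P * P' - Q * Q').
  by rewrite cross_ac dot_ac; field; rewrite dot_ac_neq0 gt_eqF.
by field; rewrite !gt_eqF.
Qed.

Definition turn_sum (f : nat -> Cpt R) (N : nat) : R :=
  \sum_(0 <= j < N) turn (f j) (f j.+1).

(* Each grid cell contributes nothing, by [turnD], and the sides are constant. *)
Lemma turn_sum_grid (F : nat -> nat -> Cpt R) (N : nat) c0 c1 :
  (forall i j, (i < N)%N -> (j <= N)%N -> close (F i j) (F i.+1 j)) ->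
  (forall i j, (i <= N)%N -> (j < N)%N -> close (F i j) (F i j.+1)) ->
  (forall i, (i <= N)%N -> F i 0%N = c0 /\ F i N = c1) ->
  turn_sum (F 0%N) N = turn_sum (F N) N.
Proof.
move=> vert horiz sides.
suff turn_sum_row i : (i <= N)%N -> turn_sum (F i) N = turn_sum (F 0%N) N.
  by rewrite turn_sum_row.
elim: i => [//|i IHi] iN; rewrite -IHi ?(ltnW iN) //.
pose V j := turn (F i j) (F i.+1 j).
have cell j : (j < N)%N ->
    turn (F i.+1 j) (F i.+1 j.+1) = turn (F i j) (F i j.+1) + (V j.+1 - V j).
  move=> jN.
  have := turnD (horiz i j (ltnW iN) jN) (vert i j.+1 iN jN).
  have := turnD (vert i j iN (ltnW jN)) (horiz i.+1 j iN jN).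
  rewrite /V; lra.
rewrite /turn_sum (eq_big_nat _ _ (F2 := fun j => turn (F i j) (F i j.+1) + (V j.+1 - V j))).
  rewrite big_split /= telescope_sumr // /V.
  have [-> ->] := sides i (ltnW iN); have [-> ->] := sides i.+1 iN.
  by rewrite !turn_id subrr addr0.
by move=> j /andP[_ jN]; exact: cell.
Qed.

End Turn.

Section Lebesgue.
Variables (R : realType) (T : pseudoPMetricType R).

Lemma seq_pos_lower_bound (I : eqType) (f : I -> R) (s : seq I) :
  (forall i, i \in s -> 0 < f i) -> exists2 d, 0 < d & forall i, i \in s -> d <= f i.
Proof.
elim: s => [|a s IHs] f_gt0; first by exists 1.
have [d d_gt0 le_d] : exists2 d, 0 < d & forall i, i \in s -> d <= f i.
  by apply: IHs => i si; apply: f_gt0; rewrite inE si orbT.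
exists (Num.min d (f a)); first by rewrite lt_min d_gt0 f_gt0 // inE eqxx.
move=> i; rewrite inE => /orP[/eqP ->|si]; first by rewrite ge_min lexx orbT.
by rewrite ge_min le_d.
Qed.

Lemma lebesgue_number (K : set T) (P : T -> T -> Prop) : compact K ->
  (forall x, K x -> exists2 r, 0 < r &
     forall y z, K y -> K z -> ball x r y -> ball x r z -> P y z) ->
  exists2 d, 0 < d & forall y z, K y -> K z -> ball y d z -> P y z.
Proof.
move=> K_compact local.
have local_total x : exists rx : R, 0 < rx /\
    (K x -> forall y z, K y -> K z -> ball x rx y -> ball x rx z -> P y z).
  have [/local[rx rx_gt0 Prx]|Kx] := pselect (K x); first by exists rx.
  by exists 1.
have [r r_spec] := choice local_total.
have r2_gt0 x : 0 < r x / 2 by have [] := r_spec x; lra.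
move: K_compact; rewrite compact_cover => /(_ _ K (fun x => (ball x (r x / 2))°)).
case=> [x _|x Kx|D DK cover_D]; first exact: open_interior.
  exists x => //; apply: nbhs_singleton; apply: nbhs_interior.
  exact: nbhsx_ballx.
have [d d_gt0 le_d] := seq_pos_lower_bound (s := finmap.enum_fset D) (fun x _ => r2_gt0 x).
exists d => // y z Ky Kz yz.
have [x Dx /interior_subset xy] := cover_D _ Ky.
have Kx : K x by have := DK x Dx; rewrite inE.
have [_ Prx] := r_spec x; have := r2_gt0 x; have := le_d x Dx => dx rx.
apply: Prx => //; first by apply: le_ball xy; lra.
by apply: le_ball (ball_triangle xy yz); lra.
Qed.

End Lebesgue.

Section PairClose.
Variable R : realType.
Implicit Types (z u v D : Cpt R).

Lemma coord_le_cabs z : `|z.1| <= cabs z /\ `|z.2| <= cabs z.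
Proof.
by split; rewrite -sqrtr_sqr; apply: ler_wsqrtr; rewrite ?lerDl ?lerDr sqr_ge0.
Qed.

Lemma cabs_le_coord z : cabs z <= `|z.1| + `|z.2|.
Proof.
rewrite /cabs -(ger0_norm (addr_ge0 (normr_ge0 z.1) (normr_ge0 z.2))) -sqrtr_sqr.
apply: ler_wsqrtr; rewrite sqrrD !real_normK ?num_real //.
by have := mulr_ge0 (normr_ge0 z.1) (normr_ge0 z.2); rewrite mulr2n; lra.
Qed.

Lemma cabs_csubxx z : cabs (csub z z) = 0.
Proof. by rewrite /cabs /csub !subrr expr0n /= addr0 sqrtr0. Qed.

Lemma close_perturb D u v : 0 < `|D.1| + `|D.2| ->
  `|(csub u D).1| <= (`|D.1| + `|D.2|) / 20 -> `|(csub u D).2| <= (`|D.1| + `|D.2|) / 20 ->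
  `|(csub v D).1| <= (`|D.1| + `|D.2|) / 20 -> `|(csub v D).2| <= (`|D.1| + `|D.2|) / 20 ->
  close u v.
Proof.
case: D u v => [a b] [u1 u2] [v1 v2] /=; set S := `|a| + `|b| => S_gt0.
set e1 := u1 - a; set e2 := u2 - b; set e3 := v1 - a; set e4 := v2 - b.
have -> : u1 = a + e1 by rewrite /e1; ring.
have -> : u2 = b + e2 by rewrite /e2; ring.
have -> : v1 = a + e3 by rewrite /e3; ring.
have -> : v2 = b + e4 by rewrite /e4; ring.
clearbody e1 e2 e3 e4.
move=> h1 h2 h3 h4; rewrite /close /cross /dot /=.
have big_small (x y : R) : `|x| <= S -> `|y| <= S / 20 -> `|x * y| <= S ^+ 2 / 20.
  by move=> hx hy; rewrite normrM expr2 -mulrA ler_pM.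
have small_small (x y : R) : `|x| <= S / 20 -> `|y| <= S / 20 -> `|x * y| <= S ^+ 2 / 400.
  move=> hx hy; rewrite normrM (_ : S ^+ 2 / 400 = (S / 20) * (S / 20)).
    by rewrite ler_pM.
  by rewrite expr2; field.
have aS : `|a| <= S by rewrite lerDl.
have bS : `|b| <= S by rewrite lerDr.
have q1 := big_small _ _ aS h1; have q2 := big_small _ _ aS h2.
have q3 := big_small _ _ aS h3; have q4 := big_small _ _ aS h4.
have r1 := big_small _ _ bS h1; have r2 := big_small _ _ bS h2.
have r3 := big_small _ _ bS h3; have r4 := big_small _ _ bS h4.
have s13 := small_small _ _ h1 h3; have s24 := small_small _ _ h2 h4.
have s14 := small_small _ _ h1 h4; have s23 := small_small _ _ h2 h3.
have S2_le : S ^+ 2 <= 2 * (a * a + b * b).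
  have na : `|a| * `|a| = a * a by rewrite -normrM -expr2 ger0_norm ?sqr_ge0.
  have nb : `|b| * `|b| = b * b by rewrite -normrM -expr2 ger0_norm ?sqr_ge0.
  by have := sqr_ge0 (`|a| - `|b|); rewrite /S !expr2 -na -nb; nra.
have S2_gt0 : 0 < S ^+ 2 by rewrite exprn_gt0.
clearbody S.
(* Expanding, |cross u v| <= (1/5 + 1/200) S^2 < (1/2 - 1/5 - 1/200) S^2 <= dot u v. *)
move: q1 q2 q3 q4 r1 r2 r3 r4 s13 s24 s14 s23; rewrite !ler_norml.
move=> /andP[? ?] /andP[? ?] /andP[? ?] /andP[? ?] /andP[? ?] /andP[? ?].
move=> /andP[? ?] /andP[? ?] /andP[? ?] /andP[? ?] /andP[? ?] /andP[? ?].
rewrite ltr_norml !mulrDr !mulrDl; apply/andP; split; lra.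
Qed.

Lemma cabs_lt_of_dSigma (phi : nat -> Cpt R -> R) (x y : Seq R) i (eta : R) :
  0 < eta -> dSigma phi x y < w R i * Num.min eta 1 -> cabs (csub (x i) (y i)) < eta.
Proof.
move=> eta_gt0 /(le_lt_trans (dSigma_ge_coord phi x y i)).
rewrite ltr_pM2l ?w_gt0 // => lt_min_eta; rewrite ltNge; apply/negP => le_eta.
by move: lt_min_eta; rewrite ltNge le_min !ge_min le_eta lexx orbT.
Qed.

Definition pair_diff (x : Seq R) (p q : nat) : Cpt R := csub (x p) (x q).

Lemma pair_diff_move (x y : Seq R) p q (eta : R) :
  cabs (csub (x p) (y p)) < eta -> cabs (csub (x q) (y q)) < eta ->
  `|(csub (pair_diff x p q) (pair_diff y p q)).1| <= 2 * eta /\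
  `|(csub (pair_diff x p q) (pair_diff y p q)).2| <= 2 * eta.
Proof.
move=> /ltW p_eta /ltW q_eta.
have [p1 p2] := coord_le_cabs (csub (x p) (y p)).
have [q1 q2] := coord_le_cabs (csub (x q) (y q)).
have split_diff (a b c d : R) : a - b - (c - d) = (a - c) - (b - d) by ring.
have two_eta : 2 * eta = eta + eta by ring.
rewrite /pair_diff /csub /= two_eta.
split; rewrite split_diff; apply: le_trans (ler_normB _ _) _.
  by apply: lerD; [apply: le_trans p_eta | apply: le_trans q_eta].
by apply: lerD; [apply: le_trans p_eta | apply: le_trans q_eta].
Qed.

Lemma dSigma_pair_close (phi : nat -> Cpt R -> R) (x0 : Seq R) p q : x0 p <> x0 q ->
  exists2 e, 0 < e & forall y z : Seq R, dSigma phi y x0 < e -> dSigma phi z x0 < e ->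
    close (pair_diff y p q) (pair_diff z p q).
Proof.
move=> x0_pq; set D := pair_diff x0 p q; set S := `|D.1| + `|D.2|.
have S_gt0 : 0 < S.
  rewrite lt_def addr_ge0 // andbT; apply/negP => /eqP; rewrite /S => S0.
  have /eqP : `|D.1| = 0 by have := normr_ge0 D.1; have := normr_ge0 D.2; lra.
  have /eqP : `|D.2| = 0 by have := normr_ge0 D.1; have := normr_ge0 D.2; lra.
  rewrite !normr_eq0 /D /pair_diff /csub /= !subr_eq0 => /eqP e2 /eqP e1.
  by apply: x0_pq; rewrite [LHS]surjective_pairing [RHS]surjective_pairing e1 e2.
have eta_gt0 : 0 < S / 40 by rewrite divr_gt0.
exists (Num.min (w R p * Num.min (S / 40) 1) (w R q * Num.min (S / 40) 1)).
  by rewrite lt_min !mulr_gt0 ?w_gt0 // lt_min eta_gt0 ltr01.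
have near_D y :
    dSigma phi y x0 < Num.min (w R p * Num.min (S / 40) 1) (w R q * Num.min (S / 40) 1) ->
    `|(csub (pair_diff y p q) D).1| <= S / 20 /\ `|(csub (pair_diff y p q) D).2| <= S / 20.
  rewrite lt_min => /andP[/(cabs_lt_of_dSigma eta_gt0) yp /(cabs_lt_of_dSigma eta_gt0) yq].
  by have [] := pair_diff_move yp yq; split; lra.
move=> y z /near_D[y1 y2] /near_D[z1 z2].
by apply: (close_perturb (D := D)).
Qed.

Definition square_continuous (phi : nat -> Cpt R -> R) (H : R -> R -> Seq R) : Prop :=
  forall s t, unitI s -> unitI t -> forall e : R, 0 < e -> exists2 d : R, 0 < d &
    forall s' t', unitI s' -> unitI t' -> `|s' - s| < d -> `|t' - t| < d ->
      dSigma phi (H s' t') (H s t) < e.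

(* Declaring [R * R] pointed again lets HB build its [ptopologicalType]
   structure, which [lebesgue_number] needs. *)
HB.instance Definition _ := isPointed.Build (R * R)%type (0, 0).

Let unit_square : set (R * R) := `[0, 1]%classic `*` `[0, 1]%classic.

Let unit_squareP (y : R * R) : unit_square y <-> unitI y.1 /\ unitI y.2.
Proof. by rewrite /unit_square /= /unitI !in_itv. Qed.

Let ball_square (y z : R * R) (d : R) :
  ball y d z <-> `|y.1 - z.1| < d /\ `|y.2 - z.2| < d.
Proof.
change (ball y.1 d z.1 /\ ball y.2 d z.2 <-> `|y.1 - z.1| < d /\ `|y.2 - z.2| < d).
by rewrite -!ball_normE.
Qed.

Lemma homotopy_pair_close (phi : nat -> Cpt R -> R) (H : R -> R -> Seq R) p q :
  square_continuous phi H ->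
  (forall s t, unitI s -> unitI t -> H s t p <> H s t q) ->
  exists2 d : R, 0 < d & forall s1 t1 s2 t2,
    unitI s1 -> unitI t1 -> unitI s2 -> unitI t2 -> `|s1 - s2| < d -> `|t1 - t2| < d ->
    close (pair_diff (H s1 t1) p q) (pair_diff (H s2 t2) p q).
Proof.
move=> H_cont H_pq.
have square_compact : compact unit_square by apply: compact_setX; exact: segment_compact.
have [|d d_gt0 close_d] := lebesgue_number square_compact
  (P := fun y z : R * R => close (pair_diff (H y.1 y.2) p q) (pair_diff (H z.1 z.2) p q)).
  move=> [s t] /unit_squareP[/= us ut].
  have [e e_gt0 close_e] := dSigma_pair_close phi (H_pq s t us ut).
  have [r r_gt0 near_r] := H_cont s t us ut e e_gt0.
  exists r => // y z /unit_squareP[y1 y2] /unit_squareP[z1 z2].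
  move=> /ball_square[/= ry1 ry2] /ball_square[/= rz1 rz2].
  by apply: close_e; apply: near_r => //; rewrite distrC.
exists d => // s1 t1 s2 t2 u1 v1 u2 v2 ds dt.
by apply: (close_d (s1, t1) (s2, t2)); [apply/unit_squareP..|apply/ball_square].
Qed.

End PairClose.

Section Triangle.
Variable R : realType.
Implicit Types u v : R.

(* The boundary of the triangle with vertices (-1,0), (1/2,1/2), (1/2,-1/2),
   traversed clockwise around the origin for u in [0,1], resting at (-1,0)
   outside [0,1]. *)
Definition tri u : Cpt R :=
  if u <= 0 then (-1, 0)
  else if u <= 1/3 then (-1 + 9/2 * u, 3/2 * u)
  else if u <= 2/3 then (1/2, 1/2 - 3 * (u - 1/3))
  else if u <= 1 then (1/2 - 9/2 * (u - 2/3), -1/2 + 3/2 * (u - 2/3))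
  else (-1, 0).

Local Ltac tri_cases u := rewrite /tri; case: (leP u 0) => ?; [|case: (leP u (1/3)) => ?;
  [|case: (leP u (2/3)) => ?; [|case: (leP u 1) => ?]]] => /=.

Lemma tri_le0 u : u <= 0 -> tri u = (-1, 0).
Proof. by move=> u_le0; rewrite /tri u_le0. Qed.

Lemma tri_gt1 u : 1 < u -> tri u = (-1, 0).
Proof. by move=> u_gt1; tri_cases u => //; exfalso; lra. Qed.

Lemma tri_re_bounds u : -1 <= (tri u).1 <= 1/2.
Proof. by tri_cases u; apply/andP; split; lra. Qed.

Lemma tri_im0 u : (tri u).2 = 0 -> (tri u).1 = -1 \/ (tri u).1 = 1/2.
Proof. by tri_cases u => h; (left; lra) || (right; lra). Qed.

Let tri_lipschitz_le u v : u <= v ->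
  `|(tri u).1 - (tri v).1| <= 5 * (v - u) /\ `|(tri u).2 - (tri v).2| <= 5 * (v - u).
Proof. by move=> uv; rewrite !ler_norml; tri_cases u; tri_cases v; split; apply/andP; split; lra. Qed.

Lemma tri_lipschitz u v :
  `|(tri u).1 - (tri v).1| <= 5 * `|u - v| /\ `|(tri u).2 - (tri v).2| <= 5 * `|u - v|.
Proof.
have [uv|/ltW vu] := leP u v.
  have vu_ge0 : 0 <= v - u by rewrite subr_ge0.
  by rewrite (distrC u v) (ger0_norm vu_ge0); exact: tri_lipschitz_le.
have uv_ge0 : 0 <= u - v by rewrite subr_ge0.
rewrite (ger0_norm uv_ge0) (distrC (tri u).1) (distrC (tri u).2).
exact: tri_lipschitz_le.
Qed.

Lemma tri_cross_le0 u v : u <= v -> v <= u + 1/3 -> cross (tri u) (tri v) <= 0.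
Proof.
move=> uv vu; rewrite /cross.
by tri_cases u; tri_cases v; case: (leP u (2/9)) => ?; case: (leP u (5/9)) => ?; nra.
Qed.

End Triangle.

Section Loops.
Variable R : realType.
Implicit Types (S : nat -> bool) (t : R).

(* The k-th pair runs through [tri] during the time interval
   [1 - 2^-k, 1 - 2^-(k+1)]. *)
Definition pair_time (k : nat) t : R := 2 ^+ k.+1 * (t - 1) + 2.

(* Point [2k] circles around point [2k+1] exactly when [k] is selected by [S]. *)
Definition moving S (i : nat) : bool := ~~ odd i && S i./2.

Definition loopS S t : Seq R := fun i =>
  if moving S i then (i.+2%:R + (tri (pair_time i./2 t)).1, (tri (pair_time i./2 t)).2)
  else Ntilde R i.

Let natrS2 i : i.+2%:R = i.+1%:R + 1 :> R.
Proof. by rewrite -addn1 natrD. Qed.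

Lemma loopS_rest S t : (forall k, tri (pair_time k t) = (-1, 0)) -> loopS S t = Ntilde R.
Proof.
move=> rest; apply: funext => i; rewrite /loopS; case: moving => //.
by rewrite rest /= natrS2 addrK.
Qed.

Lemma loopS0 S : loopS S 0 = Ntilde R.
Proof.
apply: loopS_rest => k; apply: tri_le0; rewrite /pair_time.
have : 2 <= (2 : R) ^+ k.+1.
  by rewrite exprS -[X in X <= _]mulr1 ler_pM2l ?exprn_ege1 ?ler1n.
lra.
Qed.

Lemma loopS1 S : loopS S 1 = Ntilde R.
Proof.
by apply: loopS_rest => k; apply: tri_gt1; rewrite /pair_time subrr mulr0 add0r; lra.
Qed.

Lemma loopS_re S t i : i.+1%:R <= (loopS S t i).1 <= i.+1%:R + 3/2.
Proof.
rewrite /loopS; case: moving => /=; last by rewrite lexx /=; lra.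
by have /andP[] := tri_re_bounds (pair_time i./2 t); rewrite natrS2; lra.
Qed.

Let loopS_neq_succ S t i : loopS S t i <> loopS S t i.+1.
Proof.
rewrite /loopS; case m_i: (moving S i); case m_Si: (moving S i.+1).
- by move: m_i m_Si; rewrite /moving /= negbK => /andP[/negbTE -> _].
- by move=> [re im]; have [tri_re|tri_re] := tri_im0 im; rewrite tri_re in re; lra.
- move=> [re _]; have := loopS_re S t i.+1; rewrite /loopS m_Si /= -re natrS2.
  by case/andP; lra.
- by rewrite /Ntilde => -[]; rewrite natrS2; lra.
Qed.

Lemma loopS_inj S t : injective (loopS S t).
Proof.
suff lt_neq i j : (i < j)%N -> loopS S t i <> loopS S t j.
  move=> i j eq_ij; case: (ltngtP i j) => // [/lt_neq|/lt_neq] //.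
  by rewrite eq_ij.
move=> ij; have [->|j_gt] := eqVneq j i.+1; first exact: loopS_neq_succ.
have i2j : (i.+2 <= j)%N by rewrite ltn_neqAle eq_sym j_gt ij.
have := loopS_re S t i; have := loopS_re S t j => /andP[j_re _] /andP[_ i_re] eq_ij.
have : i.+1%:R + 2 <= j.+1%:R :> R by rewrite -natrD ler_nat addn2.
by rewrite eq_ij in i_re; lra.
Qed.

Lemma re_le_cabs (z : Cpt R) : z.1 <= cabs z.
Proof. by have [+ _] := coord_le_cabs z; apply: le_trans (ler_norm _). Qed.

Lemma conf_loopS S t : conf (loopS S t).
Proof.
split; first by move=> i j ij /loopS_inj.
move=> r r_gt0; apply: (@sub_finite_set _ _ `I_(Num.truncn r).+1); last exact: finite_II.
move=> j /= j_r; have /andP[j_re _] := loopS_re S t j.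
have : j.+1%:R <= r by have := re_le_cabs (loopS S t j); lra.
by rewrite -truncn_gt_nat => /ltnW.
Qed.

End Loops.

Section LoopContinuity.
Variable R : realType.

Definition continuous_at_eps (f : R -> R) (t : R) : Prop :=
  forall e : R, 0 < e -> exists2 d : R, 0 < d & forall s, `|s - t| < d -> `|f s - f t| < e.

Lemma continuous_at_eps_sum (F : nat -> R -> R) (t : R) (M : nat) :
  (forall i, (i < M)%N -> continuous_at_eps (F i) t) ->
  continuous_at_eps (fun s => \sum_(0 <= i < M) F i s) t.
Proof.
elim: M => [|M IHM] F_cont e e_gt0.
  by exists 1 => // s _; rewrite !big_geq // subrr normr0.
have [d1 d1_gt0 near1] := IHM (fun i iM => F_cont i (ltnW iM)) (e / 2) ltac:(lra).
have [d2 d2_gt0 near2] := F_cont M (ltnSn M) (e / 2) ltac:(lra).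
exists (Num.min d1 d2) => [|s]; first by rewrite lt_min d1_gt0 d2_gt0.
rewrite lt_min => /andP[/near1 s1 /near2 s2]; rewrite !big_nat_recr //=.
rewrite opprD addrACA; apply: le_lt_trans (ler_normD _ _) _; lra.
Qed.

Lemma continuous_at_eps_lipschitz (f : R -> R) (t L : R) : 0 < L ->
  (forall s, `|f s - f t| <= L * `|s - t|) -> continuous_at_eps f t.
Proof.
move=> L_gt0 f_lip e e_gt0; exists (e / L) => [|s st]; first by rewrite divr_gt0.
apply: le_lt_trans (f_lip s) _.
by rewrite -(divfK (lt0r_neq0 L_gt0) e) mulrC ltr_pM2r.
Qed.

Lemma continuous_coord_eps (f : Cpt R -> R) (p : Cpt R) : continuous f ->
  forall e : R, 0 < e -> exists2 d : R, 0 < d &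
    forall q : Cpt R, `|p.1 - q.1| < d -> `|p.2 - q.2| < d -> `|f p - f q| < e.
Proof.
move=> f_cont e e_gt0.
have [d d_gt0 ball_d] := (nbhs_ballP _ _).1 (cvgr_dist_lt f (f p) (f_cont p) e e_gt0).
exists d => // q q1 q2; apply: ball_d.
by change (ball p.1 d q.1 /\ ball p.2 d q.2); rewrite -!ball_normE.
Qed.

(* A Lipschitz constant of [t |-> loopS S t i]. *)
Definition speed (i : nat) : R := 5 * 2 ^+ (i./2).+1.

Lemma speed_gt0 i : 0 < speed i.
Proof. by rewrite /speed mulr_gt0 // exprn_gt0. Qed.

Lemma loopS_lipschitz S s t i :
  `|(loopS S s i).1 - (loopS S t i).1| <= speed i * `|s - t| /\
  `|(loopS S s i).2 - (loopS S t i).2| <= speed i * `|s - t|.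
Proof.
have speed_ge0 := ltW (speed_gt0 i).
rewrite /loopS; case: moving => /=; last by rewrite !subrr normr0 mulr_ge0.
have [lip1 lip2] := tri_lipschitz (pair_time i./2 s) (pair_time i./2 t).
have time_dist : `|pair_time i./2 s - pair_time i./2 t| = 2 ^+ (i./2).+1 * `|s - t|.
  rewrite /pair_time (_ : _ - _ = 2 ^+ (i./2).+1 * (s - t)); last by ring.
  by rewrite normrM ger0_norm // exprn_ge0.
rewrite time_dist mulrA in lip1 lip2.
have shift (c a b : R) : c + a - (c + b) = a - b by ring.
by rewrite shift.
Qed.

Lemma cabs_loopS_lipschitz S s t i :
  cabs (csub (loopS S s i) (loopS S t i)) <= 2 * speed i * `|s - t|.
Proof.
apply: le_trans (cabs_le_coord _) _.
by have [] := loopS_lipschitz S s t i; rewrite /csub /=; lra.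
Qed.

Lemma psum_loopS (f : Cpt R -> R) (m : R) S t (M : nat) :
  supported_in m f -> m < M%:R ->
  psum f (Pset (loopS S t)) = \sum_(0 <= i < M) f (loopS S t i).
Proof.
move=> f_supp mM; rewrite /psum /Pset.
have loopS_set_inj : set_inj setT (loopS S t) by move=> i j _ _ /loopS_inj.
rewrite fsbig_image // -(fsbig_widen `I_M setT) //; first by rewrite -fsbig_ord big_mkord.
move=> i [_ /= iM]; apply: f_supp; have /andP[i_re _] := loopS_re S t i.
have : M%:R <= i%:R :> R by rewrite ler_nat leqNgt; apply/negP.
have := re_le_cabs (loopS S t i); rewrite -addn1 natrD in i_re; lra.
Qed.

Lemma psum_loopS_continuous (f : Cpt R -> R) S t :
  continuous f -> (exists m, supported_in m f) ->
  continuous_at_eps (fun s => psum f (Pset (loopS S s))) t.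
Proof.
move=> f_cont [m f_supp].
have mM : m < (Num.truncn m).+1%:R by apply: truncnS_gt.
under [X in continuous_at_eps X]funext do rewrite (psum_loopS _ _ f_supp mM).
apply: continuous_at_eps_sum => i _ e e_gt0.
have [d d_gt0 near_d] := continuous_coord_eps (loopS S t i) f_cont e_gt0.
exists (d / speed i) => [|s st]; first by rewrite divr_gt0 ?speed_gt0.
have speed_st : speed i * `|s - t| < d.
  by rewrite -(divfK (lt0r_neq0 (speed_gt0 i)) d) mulrC ltr_pM2r ?speed_gt0.
rewrite distrC; have [lip1 lip2] := loopS_lipschitz S s t i.
by apply: near_d; rewrite distrC; apply: le_lt_trans speed_st.
Qed.

Lemma dSigma_continuous_at (phi : nat -> Cpt R -> R) (x : R -> Seq R) (t : R) :
  (forall j, continuous_at_eps (fun s => cabs (csub (x s j) (x t j))) t) ->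
  (forall j, continuous_at_eps (fun s => psum (phi j) (Pset (x s))) t) ->
  forall e : R, 0 < e -> exists2 d : R, 0 < d &
    forall s, `|s - t| < d -> dSigma phi (x s) (x t) < e.
Proof.
move=> coord_cont psum_cont e e_gt0.
have [J tail_J] : exists J : nat, 2 ^- J < e / 6 :> R by apply: exp2N_small; lra.
pose F1 j s := cabs (csub (x s j) (x t j)).
pose F2 j s := `|psum (phi j) (Pset (x s)) - psum (phi j) (Pset (x t))|.
have F2_cont j : continuous_at_eps (F2 j) t.
  move=> e' e'_gt0; have [d d_gt0 near_d] := psum_cont j e' e'_gt0.
  by exists d => // s /near_d; rewrite /F2 subrr normr0 subr0 normr_id.
have [d1 d1_gt0 near1] :=
  continuous_at_eps_sum (M := J) (fun j _ => coord_cont j) (e := e / 3) ltac:(lra).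
have [d2 d2_gt0 near2] :=
  continuous_at_eps_sum (M := J) (fun j _ => F2_cont j) (e := e / 3) ltac:(lra).
exists (Num.min d1 d2) => [|s]; first by rewrite lt_min d1_gt0 d2_gt0.
rewrite lt_min => /andP[/near1 sum1 /near2 sum2].
rewrite [X in _ - X]big1 ?subr0 in sum1; last by move=> j _ /=; exact: cabs_csubxx.
rewrite [X in _ - X]big1 ?subr0 in sum2; last by move=> j _; rewrite /F2 subrr normr0.
have := dSigma_le_partial phi (x s) (x t) J.
have := ler_norm (\sum_(0 <= j < J) F1 j s); have := ler_norm (\sum_(0 <= j < J) F2 j s).
have : 0 < 2 ^- J :> R by rewrite invr_gt0 exprn_gt0.
rewrite /F1 /F2; lra.
Qed.

Lemma loop_loopS (phi : nat -> Cpt R -> R) S : good_test_seq phi -> loop phi (Ntilde R) (loopS S).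
Proof.
move=> [phi_Cc _]; split; first by move=> t _; exact: conf_loopS.
split; last by rewrite loopS0 loopS1.
move=> t _ e e_gt0.
have coord_cont j : continuous_at_eps (fun s => cabs (csub (loopS S s j) (loopS S t j))) t.
  apply: (continuous_at_eps_lipschitz (L := 2 * speed j)) => [|s].
    by rewrite mulr_gt0 ?speed_gt0.
  by rewrite cabs_csubxx subr0 ger0_norm ?cabs_ge0 ?cabs_loopS_lipschitz.
have psum_cont j : continuous_at_eps (fun s => psum (phi j) (Pset (loopS S s))) t.
  by have [] := phi_Cc j; exact: psum_loopS_continuous.
have [d d_gt0 near_d] := dSigma_continuous_at coord_cont psum_cont e_gt0.
by exists d => // s _ /near_d.
Qed.

End LoopContinuity.

Section Winding.
Variable R : realType.

Lemma turn_sum_tri_lt0 (M N j0 : nat) : (3 <= M)%N -> (j0 < N)%N ->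
  let u j : R := (j%:R - j0%:R) / M%:R in
  (forall j, (j < N)%N -> 0 < dot (tri (u j)) (tri (u j.+1))) ->
  turn_sum (fun j => tri (u j)) N < 0.
Proof.
move=> M3 j0N u dot_gt0.
have M_ge3 : 3 <= M%:R :> R by rewrite (ler_nat R 3 M).
have step_gt0 : 0 < M%:R^-1 :> R by rewrite invr_gt0; lra.
have step_le : M%:R^-1 <= 1/3 :> R by rewrite div1r lef_pV2 ?posrE; lra.
have u_step j : u j.+1 = u j + M%:R^-1.
  by rewrite /u -addn1 natrD addrAC mulrDl mul1r.
have step_le0 j : (j < N)%N -> turn (tri (u j)) (tri (u j.+1)) <= 0.
  move=> jN; apply: turn_le0 (dot_gt0 j jN); apply: tri_cross_le0; rewrite u_step; lra.
have turn_j0 : turn (tri (u j0)) (tri (u j0.+1)) < 0.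
  apply: turn_lt0 (dot_gt0 j0 j0N).
  rewrite u_step /u subrr mul0r add0r tri_le0 // /tri leNgt step_gt0 /= step_le.
  by rewrite /cross /=; lra.
rewrite /turn_sum (big_cat_nat (leq0n j0) (ltnW j0N)) /= [in X in _ + X]big_ltn //.
have sum_le0 m n : (n <= N)%N -> \sum_(m <= j < n) turn (tri (u j)) (tri (u j.+1)) <= 0.
  move=> nN; rewrite big_nat; apply: sumr_le0 => j /andP[_ jn].
  by apply: step_le0; apply: leq_trans jn nN.
have := sum_le0 0%N j0 (ltnW j0N); have := sum_le0 j0.+1 N (leqnn N); lra.
Qed.

Lemma pair_diff_loopS_moving (X : nat -> bool) k (t : R) : X k ->
  pair_diff (loopS X t) k.*2 k.*2.+1 = tri (pair_time k t).
Proof.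
move=> Xk; rewrite /pair_diff /loopS /moving /= odd_double /= doubleK Xk /=.
by rewrite /Ntilde /csub /= subr0 [RHS]surjective_pairing; congr (_, _); ring.
Qed.

Lemma pair_diff_loopS_rest (X : nat -> bool) k (t : R) : ~~ X k ->
  pair_diff (loopS X t) k.*2 k.*2.+1 = pair_diff (Ntilde R) k.*2 k.*2.+1.
Proof.
by move=> /negbTE Xk; rewrite /pair_diff /loopS /moving /= odd_double /= doubleK Xk.
Qed.

Lemma pair_time_grid k (M j : nat) : (0 < M)%N ->
  pair_time k (j%:R / (2 ^ k.+1 * M)%N%:R) =
    (j%:R - (2 ^ k.+1 * M - 2 * M)%N%:R) / M%:R :> R.
Proof.
move=> M_gt0; have M_neq0 : M%:R != 0 :> R by rewrite pnatr_eq0 -lt0n.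
have two_le : (2 * M <= 2 ^ k.+1 * M)%N by rewrite leq_mul2r expnS leq_pmulr ?expn_gt0 ?orbT.
rewrite /pair_time natrB // !natrM natrX; field.
by rewrite M_neq0 expf_neq0 // pnatr_eq0.
Qed.

Lemma unitI_grid (N j : nat) : (0 < N)%N -> (j <= N)%N -> unitI (j%:R / N%:R : R).
Proof.
move=> N_gt0 jN.
by rewrite /unitI divr_ge0 // andTb ler_pdivrMr ?ltr0n // mul1r ler_nat.
Qed.

Lemma eq_turn_sum (f g : nat -> Cpt R) N :
  (forall j, (j <= N)%N -> f j = g j) -> turn_sum f N = turn_sum g N.
Proof.
by move=> fg; apply: eq_big_nat => j /andP[_ jN]; rewrite !fg // ltnW.
Qed.

Lemma homotopy_turn_sum (phi : nat -> Cpt R -> R) (H : R -> R -> Seq R) p q (b : Seq R) :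
  square_continuous phi H -> (forall s t, unitI s -> unitI t -> H s t p <> H s t q) ->
  (forall s, unitI s -> H s 0 = b /\ H s 1 = b) ->
  exists2 d : R, 0 < d & forall N : nat, (0 < N)%N -> N%:R^-1 < d ->
    let path s j := pair_diff (H s (j%:R / N%:R)) p q in
    turn_sum (path 0) N = turn_sum (path 1) N /\
    forall s, unitI s -> forall j, (j < N)%N -> close (path s j) (path s j.+1).
Proof.
move=> H_cont H_pq H_ends.
have [d d_gt0 close_d] := homotopy_pair_close H_cont H_pq.
exists d => // N N_gt0 mesh path.
have grid_unit j : (j <= N)%N -> unitI (j%:R / N%:R : R) := unitI_grid N_gt0.
have grid_step j : `|j.+1%:R / N%:R - j%:R / N%:R| < d :> R.
  by rewrite -mulrBl -natr1 addrAC subrr add0r mul1r ger0_norm ?invr_ge0.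
have grid_step' j : `|j%:R / N%:R - j.+1%:R / N%:R| < d by rewrite distrC.
have step_close s : unitI s -> forall j, (j < N)%N -> close (path s j) (path s j.+1).
  move=> us j jN; apply: close_d; rewrite ?grid_step' ?subrr ?normr0 //.
    by apply: grid_unit; exact: ltnW.
  exact: grid_unit.
split; last exact: step_close.
have grid0 : 0%:R / N%:R = 0 :> R by rewrite mul0r.
have gridN : N%:R / N%:R = 1 :> R by rewrite divff // pnatr_eq0 -lt0n.
have := turn_sum_grid (F := fun i => path (i%:R / N%:R)) (N := N)
  (c0 := pair_diff b p q) (c1 := pair_diff b p q).
rewrite grid0 gridN; apply.
- move=> i j iN jN; apply: close_d; rewrite ?grid_step' ?subrr ?normr0 //;
    by apply: grid_unit; rewrite // ltnW.
- by move=> i j iN jN; apply: step_close => //; exact: grid_unit.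
- move=> i iN; have [H0 H1] := H_ends _ (grid_unit i iN).
  by rewrite /path grid0 gridN H0 H1.
Qed.

Definition pair_path (Z : nat -> bool) k (N : nat) : nat -> Cpt R :=
  fun j => pair_diff (loopS Z (j%:R / N%:R)) k.*2 k.*2.+1.

Lemma turn_sum_pair_path_eq0 (Z : nat -> bool) k (M : nat) : (3 <= M)%N ->
  let N := (2 ^ k.+1 * M)%N in
  (forall j, (j < N)%N -> close (pair_path Z k N j) (pair_path Z k N j.+1)) ->
  (turn_sum (pair_path Z k N) N == 0) = ~~ Z k.
Proof.
move=> M3 N steps_close; have M_gt0 : (0 < M)%N by apply: leq_trans M3.
have [Zk|nZk] /= := boolP (Z k); last first.
  rewrite /turn_sum big1 ?eqxx // => j _.
  by rewrite /pair_path !pair_diff_loopS_rest // turn_id.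
have path_tri j : pair_path Z k N j = tri ((j%:R - (N - 2 * M)%N%:R) / M%:R).
  by rewrite /pair_path pair_diff_loopS_moving // pair_time_grid.
have j0N : (N - 2 * M < N)%N.
  by rewrite ltn_subrL !muln_gt0 expn_gt0 M_gt0.
rewrite (eq_turn_sum (g := fun j => tri ((j%:R - (N - 2 * M)%N%:R) / M%:R))); last first.
  by move=> j _; exact: path_tri.
apply/negbTE; rewrite lt_eqF // turn_sum_tri_lt0 // => j jN.
by rewrite -!path_tri; apply: close_dot_gt0; exact: steps_close.
Qed.

Lemma loopS_not_homotopic (phi : nat -> Cpt R -> R) (X Y : nat -> bool) k :
  X k != Y k -> ~ loop_homotopic phi (Ntilde R) (loopS X) (loopS Y).
Proof.
move=> XYk [H [H_conf [H_cont [H0 [H1 H_ends]]]]].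
have H_pair s t : unitI s -> unitI t -> H s t k.*2 <> H s t k.*2.+1.
  move=> us ut; apply: (H_conf s t us ut).1.
  by move/(congr1 odd); rewrite /= odd_double.
have [d d_gt0 turn_inv] := homotopy_turn_sum H_cont H_pair H_ends.
pose M := (Num.truncn d^-1).+3; pose N := (2 ^ k.+1 * M)%N.
have N_gt0 : (0 < N)%N by rewrite muln_gt0 expn_gt0.
have mesh : N%:R^-1 < d.
  have M_le : (M <= N)%N by rewrite leq_pmull // expn_gt0.
  have trunc_M : ((Num.truncn d^-1).+1 <= M)%N by apply: leq_trans (leqnSn _) (leqnSn _).
  have : d^-1 < N%:R.
    by apply: lt_le_trans (truncnS_gt _) _; rewrite ler_nat (leq_trans trunc_M M_le).
  by rewrite -[d in _ < d]invrK ltf_pV2 ?posrE ?invr_gt0 ?ltr0n.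
have [turn_eq steps_close] := turn_inv N N_gt0 mesh.
have grid_unit j : (j <= N)%N -> unitI (j%:R / N%:R : R) := unitI_grid N_gt0.
have row (s : R) Z : unitI s -> (forall t, unitI t -> H s t = loopS Z t) ->
    (turn_sum (fun j => pair_diff (H s (j%:R / N%:R)) k.*2 k.*2.+1) N == 0) = ~~ Z k.
  move=> us HZ; rewrite (eq_turn_sum (g := pair_path Z k N)); last first.
    by move=> j jN; rewrite /pair_path HZ //; exact: grid_unit.
  apply: turn_sum_pair_path_eq0 => // j jN.
  rewrite /pair_path -!HZ; first exact: steps_close.
  1,2: by rewrite -/N; apply: grid_unit; rewrite // ltnW.
have unit0 : unitI (0 : R) by rewrite /unitI lexx ler01.
have unit1 : unitI (1 : R) by rewrite /unitI ler01 lexx.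
move: XYk; rewrite -[X k]negbK -[Y k]negbK.
by rewrite -(row 0 X unit0 H0) -(row 1 Y unit1 H1) turn_eq eqxx.
Qed.

End Winding.

Lemma not_countable_of_cantor_inj (T : Type) (A : set T) (F : (nat -> bool) -> T) :
  (forall X, A (F X)) -> injective F -> ~ countable A.
Proof.
move=> AF F_inj /countable_injP[f f_inj].
pose g := f \o F.
have g_inj : injective g by move=> X Y /f_inj; rewrite !inE => /(_ (AF X) (AF Y))/F_inj.
pose D n := ~~ `[< exists X, g X = n /\ X n >].
case D_gD: (D (g D)).
  by move: (D_gD); rewrite /D => /negP; apply; apply/asboolP; exists D.
have /asboolP[X [/g_inj XD]] : `[< exists X, g X = g D /\ X (g D) >] by apply/negbFE.
by rewrite XD D_gD.
Qed.

Lemma loop_homotopic_refl (R : realType) (phi : nat -> Cpt R -> R) b g :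
  loop phi b g -> loop_homotopic phi b g g.
Proof.
move=> [g_conf [g_cont [g0 g1]]]; exists (fun _ t => g t); split=> [s t _ /g_conf //|].
split=> [s t _ ut e e_gt0|]; last by do 2!split=> //.
by have [d d_gt0 near_d] := g_cont t ut e e_gt0; exists d => // s' t' _ ut' _ /near_d; apply.
Qed.

Theorem mainTheorem5 (R : realType) (phi : nat -> Cpt R -> R) :
  good_test_seq phi -> ~ countable (pi1 phi (Ntilde R)).
Proof.
move=> phi_good.
pose class X := [set h | loop phi (Ntilde R) h /\ loop_homotopic phi (Ntilde R) (loopS X) h].
apply: (@not_countable_of_cantor_inj _ _ class) => [X|X Y eq_XY].
  by exists (loopS X) => //; exact: loop_loopS.
apply/funext => k; apply/eqP; apply: contraT => XYk.
have : class X (loopS Y).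
  by rewrite eq_XY; split; [|apply: loop_homotopic_refl]; exact: loop_loopS.
by case=> _ /(loopS_not_homotopic XYk).
Qed.
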